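(* Let $G$ be a graph and let $H=(v_1,v_2,C)$ be an induced subdivision of the $2$-pan in $G$ having the minimum number of vertices among all induced subdivisions of the $2$-pan in $G$, where $C$ is the cycle of $H$, $v_1$ is the vertex of degree $1$, and $v_2$ is the vertex of degree $2$ not on $C$. If $|V(C)|\ge 11$, then every vertex $v\in V(G)\setminus V(H)$ either has at most one neighbor in $V(C)$ or is adjacent to every vertex of $C$.
   Context: All graphs are finite and simple. An induced subdivision of a graph $F$ in $G$ is an induced subgraph of $G$ isomorphic to a graph obtained from $F$ by repeatedly replacing edges by paths of length $2$ through new vertices. The $2$-pan is the graph obtained from the disjoint union of a triangle and a path with $2$ edges by identifying one endpoint of the path with a vertex of the triangle; an induced subdivision of it consists of an induced cycle $C$ and an induced path $v_1v_2$ such that $v_2$ has exactly one neighbor on $C$ and $v_1$ has none. *)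

(* A simple graph on a finite vertex type T is a symmetric,
   irreflexive boolean relation e : rel T. *)
From mathcomp Require Import all_boot.
Set Implicit Arguments. Unset Strict Implicit. Unset Printing Implicit Defensive.

Definition cyc_adj (n i j : nat) : bool :=
  (j == i.+1 %% n) || (i == j.+1 %% n).

Definition induced_cycle (T : finType) (e : rel T) (c : seq T) : Prop :=
  [/\ uniq c, 3 <= size c &
      forall (x0 : T) (i j : nat), i < size c -> j < size c ->
        e (nth x0 c i) (nth x0 c j) = cyc_adj (size c) i j].

Definition induced_2pan (T : finType) (e : rel T) (v1 v2 : T) (c : seq T) : Prop :=
  [/\ induced_cycle e c, (v1 \notin c) && (v2 \notin c), e v1 v2,
      count (e v2) c = 1 & ~~ has (e v1) c].

Definition pan_order (T : finType) (c : seq T) : nat := (size c).+2.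

From mathcomp Require Import all_boot zify.
Set Implicit Arguments. Unset Strict Implicit. Unset Printing Implicit Defensive.

(* Two neighbours of v that
   are consecutive along C, d apart, span together with v an induced cycle of
   length d + 2; an edge of C beyond this arc with exactly one end attached to
   that cycle, and the other end not, would complete an induced 2-pan on d + 4
   vertices, which minimality forbids when d + 4 <= |C|.  Reading the
   neighbourhood of v as a cyclic 0/1 word of length n = |C|, a shortest gap
   (d <= n/2) must be d = 1, i.e. v spans a triangle with an edge of C; the
   forbidden patterns then force every vertex of C at distance >= 2 from that
   edge to be a neighbour, and applying this to the new triangles found there
   (n >= 11 leaves room) shows that v sees all of C. *)

(* [N i] reads "v is adjacent to the vertex of index i (mod n) of the cycle". *)
Definition nbr_gap (N : nat -> bool) (a d : nat) : Prop :=
  [/\ 0 < d, N a, N (a + d) & forall i, 0 < i < d -> ~~ N (a + i)].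

Definition nbrs_apart (N : nat -> bool) (d : nat) : Prop :=
  forall b k, 0 < k < d -> N b -> ~~ N (b + k).

(* No edge {a+s, a+t} of the cycle outside the arc from a to a+d yields a
   2-pan with the short cycle formed by v and that arc: either a+t sees v, or
   a+s does not have exactly one neighbour on it ([a+d] is its only possible
   neighbour on the arc). *)
Definition pan_free (n : nat) (N : nat -> bool) : Prop :=
  forall a d s t, nbr_gap N a d -> d.+2 <= t -> t.+2 <= n -> d < s -> s.+2 <= n ->
    (t == s.+1) || (s == t.+1) -> ~~ N (a + t) -> N (a + s) = (s == d.+1).

Section CyclicNeighbourhood.
Variables (n : nat) (N : nat -> bool).
Hypothesis N_per : forall i, N (i + n) = N i.

Lemma N_addM i m : N (i + m * n) = N i.
Proof. by elim: m => [|m IH]; rewrite ?addn0 // mulSn addnA addnAC N_per. Qed.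

Lemma N_modn i : N (i %% n) = N i.
Proof. by rewrite {2}(divn_eq i n) addnC N_addM. Qed.

Lemma min_gap lo hi : lo < hi < n -> N lo -> N hi ->
  exists a d, [/\ 0 < d, d.*2 <= n, N a, N (a + d) & nbrs_apart N d].
Proof.
move=> /andP[lohi hin] Nlo Nhi; have n0 : 0 < n by lia.
pose P k := (0 < k) && [exists b : 'I_n, N b && N (b + k)].
have gapP b k : 0 < k -> N b -> N (b + k) -> P k.
  move=> k0 Nb Nbk; rewrite /P k0; apply/existsP; exists (Ordinal (ltn_pmod b n0)).
  by rewrite /= -[N (b %% n + k)]N_modn modnDml !N_modn Nb Nbk.
have P_lo : P (hi - lo) by apply: (gapP lo); rewrite ?subnKC ?subn_gt0 // ltnW.
have P_hi : P (n - (hi - lo)).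
  apply: (gapP hi); rewrite ?subn_gt0 //; first lia.
  by rewrite (_ : hi + _ = lo + n) ?N_per //; lia.
have [d /andP[d0 /existsP[a /andP[Na Nad]]] d_min] := ex_minnP (ex_intro P _ P_lo).
exists a, d; split=> //.
- by have := d_min _ P_lo; have := d_min _ P_hi; lia.
move=> b k /andP[k0 kd] Nb; apply/negP => Nbk.
by have := d_min _ (gapP b k k0 Nb Nbk); lia.
Qed.

Lemma min_gap_nbr_gap a d : 0 < d -> N a -> N (a + d) ->
  nbrs_apart N d -> nbr_gap N a d.
Proof. by move=> d0 Na Nad d_min; split=> // i /d_min; apply. Qed.

Lemma nbr_gap1 a : N a -> N a.+1 -> nbr_gap N a 1.
Proof. by rewrite -addn1; split=> // i; lia. Qed.

Hypothesis N_free : pan_free n N.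

Lemma pan_free_succ a d s : nbr_gap N a d -> d < s -> s.+3 <= n ->
  ~~ N (a + s.+1) -> N (a + s) = (s == d.+1).
Proof. by move=> gap ds sn Ns1; apply: (N_free (t := s.+1) gap) => //; lia. Qed.

Lemma pan_free_pred a d s : nbr_gap N a d -> d.+2 <= s -> s.+3 <= n ->
  N (a + s.+1) -> N (a + s).
Proof.
move=> gap ds sn Ns1; apply/negPn/negP => Ns.
by move: Ns1; rewrite (N_free (s := s.+1) (t := s) gap) ?eqxx ?orbT //; lia.
Qed.

Hypothesis n_ge11 : 11 <= n.

Lemma min_gap_eq1 a d : 0 < d -> d.*2 <= n -> N a -> N (a + d) ->
  nbrs_apart N d -> d = 1.
Proof.
move=> d0 dn Na Nad d_min; have gap := min_gap_nbr_gap d0 Na Nad d_min.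
have [d_gt1|] := ltnP 1 d; last lia.
have next_free b : N b -> ~~ N b.+1 by move=> Nb; rewrite -addn1; apply: d_min; lia.
have N1 : ~~ N (a + d.+1) by rewrite addnS next_free.
case N2: (N (a + d.+2)).
- have N3 : ~~ N (a + d.+3) by rewrite addnS next_free.
  by move: N2; rewrite (pan_free_succ (s := d.+2) gap) ?eqn_leq ?ltnn //; lia.
- by move: N1; rewrite (pan_free_succ (s := d.+1) gap) ?eqxx ?N2 //; lia.
Qed.

Lemma triangle_far_const a : nbr_gap N a 1 ->
  forall i, 3 <= i <= n - 2 -> N (a + i) = N (a + 3).
Proof.
move=> tri.
have step i : 3 <= i -> i.+3 <= n -> N (a + i.+1) = N (a + i).
  move=> i3 in3; case Ni1: (N (a + i.+1)).
  - by rewrite (pan_free_pred tri) //; lia.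
  - by rewrite (pan_free_succ tri) ?Ni1 //; lia.
have from3 k : 3 + k <= n - 2 -> N (a + (3 + k)) = N (a + 3).
  by elim: k => [|k IH] hk; rewrite ?addn0 // addnS step ?IH //; lia.
by move=> i /andP[i3 in2]; rewrite -(subnKC i3) from3 // subnKC.
Qed.

Lemma triangle_far_nbrs a : nbr_gap N a 1 -> forall i, 3 <= i <= n - 2 -> N (a + i).
Proof.
move=> tri i hi; rewrite (triangle_far_const tri hi); apply/negPn/negP => N3.
have N4 : ~~ N (a + 4) by rewrite (triangle_far_const tri) //; lia.
have [_ Na Na1 _] := tri.
case N2: (N (a + 2)).
- have tri1 : nbr_gap N (a + 1) 1 by apply: nbr_gap1; rewrite // addn1 -addn2.
  have : N (a + 1 + 2) by rewrite (pan_free_succ tri1) // -?addnA //; lia.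
  by rewrite -addnA (negbTE N3).
- by move: N2; rewrite (pan_free_succ tri) //; lia.
Qed.

Lemma triangle_all_nbrs a : nbr_gap N a 1 -> forall i, N i.
Proof.
move=> tri; have far := triangle_far_nbrs tri; have [_ Na Na1 _] := tri.
have tri3 : nbr_gap N (a + 3) 1 by apply: nbr_gap1; rewrite -?addnS far //; lia.
have tri4 : nbr_gap N (a + 4) 1 by apply: nbr_gap1; rewrite -?addnS far //; lia.
have N_last : N (a + (n - 1)).
  have := triangle_far_nbrs tri3 (i := n - 4).
  by rewrite (_ : a + 3 + _ = a + (n - 1)); [apply; lia | lia].
have N2 : N (a + 2).
  have := triangle_far_nbrs tri4 (i := n - 2).
  by rewrite (_ : a + 4 + _ = a + 2 + n) ?N_per; [apply; lia | lia].
have nbrs j : j < n -> N (a + j).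
  move=> jn; case: j jn => [|[|[|j]]] jn; rewrite ?addn0 //.
  have [->|j_last] := eqVneq j.+3 (n - 1); first by [].
  by apply: far; lia.
have {}nbrs j : N (a + j).
  by rewrite (divn_eq j n) addnCA addnC N_addM nbrs // ltn_pmod //; lia.
by move=> i; rewrite -(N_addM i a) (_ : i + a * n = a + (i + a * n - a)) ?nbrs //; nia.
Qed.

Lemma two_nbrs_all lo hi : lo < hi < n -> N lo -> N hi -> forall i, N i.
Proof.
move=> lohi Nlo Nhi.
have [a [d [d0 dn Na Nad d_min]]] := min_gap lohi Nlo Nhi.
have d1 := min_gap_eq1 d0 dn Na Nad d_min; subst d.
exact: triangle_all_nbrs (min_gap_nbr_gap d0 Na Nad d_min).
Qed.

End CyclicNeighbourhood.

Definition cyc_nth (T : Type) (x0 : T) (C : seq T) (i : nat) : T :=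
  nth x0 C (i %% size C).

Lemma cyc_nth_addn (T : Type) (x0 : T) (C : seq T) i :
  cyc_nth x0 C (i + size C) = cyc_nth x0 C i.
Proof. by rewrite /cyc_nth modnDr. Qed.

Lemma mem_cyc_nth (T : eqType) (x0 : T) (C : seq T) i :
  0 < size C -> cyc_nth x0 C i \in C.
Proof. by move=> C0; rewrite mem_nth // ltn_pmod. Qed.

Lemma cyc_nth_inj (T : eqType) (x0 : T) (C : seq T) a i j : uniq C ->
  i < size C -> j < size C -> (cyc_nth x0 C (a + i) == cyc_nth x0 C (a + j)) = (i == j).
Proof.
move=> uC i_lt j_lt; have C0 : 0 < size C by lia.
by rewrite nth_uniq ?ltn_pmod // eqn_modDl !modn_small.
Qed.

Definition cyc_arc (T : Type) (x0 : T) (C : seq T) (a d : nat) : seq T :=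
  mkseq (fun i => cyc_nth x0 C (a + i)) d.+1.

Lemma size_cons_cyc_arc (T : Type) (x0 v : T) (C : seq T) a d :
  size (v :: cyc_arc x0 C a d) = d.+2.
Proof. exact: (congr1 S (size_mkseq (fun i => cyc_nth x0 C (a + i)) d.+1)). Qed.

Lemma cyc_adjE m i j : i < m -> j < m ->
  cyc_adj m i j = [|| j == i.+1, i == j.+1, (i.+1 == m) && (j == 0) | (j.+1 == m) && (i == 0)].
Proof.
move=> i_lt j_lt; rewrite /cyc_adj.
have succ_mod k : k < m -> k.+1 %% m = if k.+1 == m then 0 else k.+1.
  by move=> k_lt; case: eqP => [->|ne]; rewrite ?modnn // modn_small //; lia.
rewrite (succ_mod i i_lt) (succ_mod j j_lt).
by case: (i.+1 =P m); case: (j.+1 =P m) => /=; lia.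
Qed.

Section ArcOfInducedCycle.
Variables (T : finType) (e : rel T) (x0 : T) (C : seq T).
Hypotheses (e_sym : symmetric e) (e_irr : irreflexive e) (C_ind : induced_cycle e C).

Lemma cyc_nth_adj a i j : i.+1 < size C -> j.+1 < size C ->
  e (cyc_nth x0 C (a + i)) (cyc_nth x0 C (a + j)) = (j == i.+1) || (i == j.+1).
Proof.
case: C_ind => _ C3 C_adj i_lt j_lt; have C0 : 0 < size C by lia.
rewrite C_adj ?ltn_pmod // /cyc_adj.
have succ_mod k : ((a + k) %% size C).+1 %% size C = (a + k.+1) %% size C.
  by rewrite -addn1 modnDml addn1 addnS.
by rewrite !succ_mod !eqn_modDl !modn_small //; lia.
Qed.

Lemma cyc_nth_notin_arc v a d k : v \notin C -> d < k < size C ->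
  cyc_nth x0 C (a + k) \notin v :: cyc_arc x0 C a d.
Proof.
move=> vC /andP[dk k_lt]; have [uC C3 _] := C_ind; have C0 : 0 < size C by lia.
rewrite in_cons negb_or; apply/andP; split.
  by apply/eqP => vE; move: vC; rewrite -vE mem_cyc_nth.
apply/mapP => -[i]; rewrite mem_iota add0n => /andP[_ id] /eqP.
rewrite cyc_nth_inj // => [/eqP|]; first lia.
exact: leq_trans id (ltnW (leq_ltn_trans dk k_lt)).
Qed.

Variable v : T.
Hypothesis vC : v \notin C.
Let N i := e v (cyc_nth x0 C i).

Lemma arc_induced_cycle a d : nbr_gap N a d -> d.+2 <= size C ->
  induced_cycle e (v :: cyc_arc x0 C a d).
Proof.
case=> d0 Na Nad N_int dn; have [uC C3 _] := C_ind.
have [C0 d_lt] : 0 < size C /\ d < size C by lia.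
have arc_nth y0 i : i < d.+1 -> nth y0 (cyc_arc x0 C a d) i = cyc_nth x0 C (a + i).
  exact: nth_mkseq.
split; rewrite ?size_cons_cyc_arc //.
- rewrite cons_uniq; apply/andP; split.
    by apply/negP => /mapP[i _ vi]; move: vC; rewrite vi mem_cyc_nth.
  rewrite map_inj_in_uniq ?iota_uniq // => i j.
  rewrite !mem_iota !add0n => /andP[_ i_lt] /andP[_ j_lt] /eqP.
  by rewrite cyc_nth_inj ?(leq_trans i_lt) ?(leq_trans j_lt) // => /eqP.
have v_nbr i : i < d.+1 -> e v (cyc_nth x0 C (a + i)) = (i == 0) || (i == d).
  move=> i_lt; have [->|i0] := eqVneq i 0; first by rewrite addn0.
  have [->|id] := eqVneq i d; first by rewrite orbT.
  by apply/negbTE/N_int; lia.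
move=> y0 [|i] [|j] i_lt j_lt; rewrite cyc_adjE //=.
- by rewrite arc_nth ?v_nbr ?andbT.
- by rewrite e_sym arc_nth ?v_nbr ?andbT ?orbF.
- by rewrite !arc_nth ?cyc_nth_adj ?andbF ?orbF; lia.
Qed.

Lemma arc_induced_2pan a d s t : nbr_gap N a d -> d.+2 <= t -> t.+2 <= size C ->
  d < s -> s.+2 <= size C -> (t == s.+1) || (s == t.+1) ->
  ~~ N (a + t) -> N (a + s) != (s == d.+1) ->
  induced_2pan e (cyc_nth x0 C (a + t)) (cyc_nth x0 C (a + s)) (v :: cyc_arc x0 C a d).
Proof.
move=> gap dt tn ds sn st Nt Ns.
have arc_adj k : d < k -> k.+2 <= size C ->
    count (e (cyc_nth x0 C (a + k))) (cyc_arc x0 C a d) = (k == d.+1).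
  move=> dk kn; rewrite count_map (@eq_in_count _ _ (pred1 k.-1)).
    by rewrite count_uniq_mem ?iota_uniq // mem_iota; lia.
  by move=> i; rewrite mem_iota => /andP[_ i_lt] /=; rewrite cyc_nth_adj; lia.
split.
- by apply: arc_induced_cycle => //; lia.
- by rewrite !cyc_nth_notin_arc //; lia.
- by rewrite cyc_nth_adj; lia.
- rewrite -cat1s count_cat arc_adj //= e_sym addn0.
  by move: Ns; rewrite /N; case: (e v _); case: (s == d.+1).
- have t_far : (t == d.+1) = false by apply/eqP; lia.
  rewrite -cat1s has_cat [has _ (cyc_arc _ _ _ _)]has_count arc_adj ?t_far; try lia.
  by rewrite /= e_sym !orbF.
Qed.

End ArcOfInducedCycle.

Lemma minimal_2pan_pan_free (T : finType) (e : rel T) (e_sym : symmetric e)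
    (e_irr : irreflexive e) (C : seq T) (v : T) :
  induced_cycle e C -> v \notin C ->
  (forall (w1 w2 : T) (C' : seq T), induced_2pan e w1 w2 C' -> pan_order C <= pan_order C') ->
  pan_free (size C) (fun i => e v (cyc_nth v C i)).
Proof.
move=> C_ind vC C_min a d s t gap dt tn ds sn st Nt; apply/eqP/negPn/negP => Ns.
have := C_min _ _ _ (arc_induced_2pan e_sym e_irr C_ind vC gap dt tn ds sn st Nt Ns).
by rewrite /pan_order size_cons_cyc_arc; lia.
Qed.

Lemma count_gt1_nth (T : Type) (x0 : T) (p : pred T) (s : seq T) : 1 < count p s ->
  exists i j, [/\ i < j < size s, p (nth x0 s i) & p (nth x0 s j)].
Proof.
elim: s => [|x s IH] //=; case px: (p x) => /= count_gt1.
- have : has p s by rewrite has_count; lia.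
  by case/(has_nthP x0) => j j_lt pj; exists 0, j.+1.
- by have [i [j [ij pi pj]]] := IH count_gt1; exists i.+1, j.+1.
Qed.

Theorem mainTheorem14 (T : finType) (e : rel T)
  (e_sym : symmetric e) (e_irr : irreflexive e)
  (v1 v2 : T) (C : seq T)
  (H : induced_2pan e v1 v2 C)
  (Hmin : forall (w1 w2 : T) (C' : seq T), induced_2pan e w1 w2 C' ->
            pan_order C <= pan_order C')
  (HC : 11 <= size C) :
  forall v : T, v \notin C -> v != v1 -> v != v2 ->
    count (e v) C <= 1 \/ all (e v) C.
Proof.
(* Only [v \notin C] matters: [v] may well be [v1] or [v2]. *)
move=> v vC _ _; have [C_ind _ _ _ _] := H.
have [|count_gt1] := leqP (count (e v) C) 1; [by left | right].
have [i [j [ij Ni Nj]]] := count_gt1_nth v count_gt1.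
have nthE k : k < size C -> cyc_nth v C k = nth v C k by move=> k_lt; rewrite /cyc_nth modn_small.
have [i_lt j_lt] : i < size C /\ j < size C by lia.
have N_per k : e v (cyc_nth v C (k + size C)) = e v (cyc_nth v C k) by rewrite cyc_nth_addn.
rewrite -!nthE // in Ni Nj.
have all_nbrs := two_nbrs_all N_per (minimal_2pan_pan_free e_sym e_irr C_ind vC Hmin) HC ij Ni Nj.
by apply/(all_nthP v) => k k_lt; rewrite -nthE.
Qed.
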